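(* Let $\alpha,\beta,\theta,\gamma>0$ and let $\{X(t):t\ge 0\}$ be the continuous-time birth and death process on $\mathbb{Z}$ with birth rates $\lambda_i=\alpha+i^-\gamma$ and death rates $\mu_i=\beta+i^+\theta$, $i\in\mathbb{Z}$. Let $\{\pi_i:i\in\mathbb{Z}\}$ be its (unique) stationary distribution, given by $\pi_i=\frac{\alpha^i}{\prod_{j=1}^i(\beta+j\theta)}\pi_0$, $\pi_{-i}=\frac{\beta^i}{\prod_{j=1}^i(\alpha+j\gamma)}\pi_0$ for $i\in\mathbb{N}$, with $\pi_0=\Big(1+\sum_{i\ge1}\frac{\alpha^i}{\prod_{j=1}^i(\beta+j\theta)}+\sum_{i\ge1}\frac{\beta^i}{\prod_{j=1}^i(\alpha+j\gamma)}\Big)^{-1}$. Then for every $x\in\mathbb{Z}$ and every $s\ge0$, $$\lim_{t\to\infty}\mathbb{E}_x\big[e^{s|X(t)|}\big]=\sum_{i=-\infty}^{\infty}e^{s|i|}\pi_i .$$ Moreover, for every measurable $f:\mathbb{Z}\to\mathbb{R}$ such that for some $s\ge0$, $|f(y)|\le e^{s|y|}$ for all $y\in\mathbb{Z}$, we have $\lim_{t\to\infty}\mathbb{E}_x[f(X(t))]=\sum_{i=-\infty}^\infty f(i)\pi_i$.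
   Context: This process is the queue length of a double-ended queue with Poisson arrivals: sellers arrive at rate $\alpha$, buyers at rate $\beta$, waiting sellers abandon at rate $\theta$ each and waiting buyers at rate $\gamma$ each; $X(t)>0$ means $X(t)$ sellers wait, $X(t)<0$ means $-X(t)$ buyers wait. For $a\in\mathbb{R}$, $a^+=\max\{a,0\}$, $a^-=\max\{0,-a\}$. $\mathbb{E}_x$ denotes expectation given $X(0)=x$. *)

From Stdlib Require Import Reals Lra Lia ZArith.
Open Scope R_scope.

Definition zpos (i : Z) : R := IZR (Z.max 0 i).
Definition zneg (i : Z) : R := IZR (Z.max 0 (- i)).

Definition birth (al ga : R) (i : Z) : R := al + zneg i * ga.
Definition death (be th : R) (i : Z) : R := be + zpos i * th.

Definition symsum (g : Z -> R) (N : nat) : R :=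
  sum_f_R0 (fun k => g (Z.of_nat k - Z.of_nat N)%Z) (2 * N).

Definition Zhas_sum (g : Z -> R) (l : R) : Prop :=
  (exists M, forall N, symsum (fun i => Rabs (g i)) N <= M) /\
  Un_cv (symsum g) l.

Fixpoint wprod (c d e : R) (n : nat) : R :=
  match n with
  | O => 1
  | S m => wprod c d e m * (c / (d + INR (S m) * e))
  end.

(* unnormalised stationary weights: w 0 = 1,
   w i = al^i / prod_{j=1}^i (be + j th),  w (-i) = be^i / prod_{j=1}^i (al + j ga) *)
Definition stat_weight (al be th ga : R) (i : Z) : R :=
  if (0 <=? i)%Z then wprod al be th (Z.to_nat i)
  else wprod be al ga (Z.to_nat (- i)).

(* P : R -> Z -> Z -> R is a substochastic solution of the backward Kolmogorov
   equations of the birth–death process with rates birth/death, started from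
   the identity. (Since the process is non-explosive, this is exactly its
   transition function P t x y = P_x(X(t) = y).) *)
Definition bd_transition (al be th ga : R) (P : R -> Z -> Z -> R) : Prop :=
  (forall t x y, 0 <= t -> 0 <= P t x y) /\
  (forall t x N, 0 <= t -> symsum (P t x) N <= 1) /\
  (forall x y, P 0 x y = if Z.eq_dec x y then 1 else 0) /\
  (forall x y eps, 0 < eps -> exists delta, 0 < delta /\
      forall t, 0 <= t < delta -> Rabs (P t x y - P 0 x y) < eps) /\
  (forall t x y, 0 < t ->
      derivable_pt_lim (fun u => P u x y) t
        (birth al ga x * P t (x + 1)%Z y + death be th x * P t (x - 1)%Z y
         - (birth al ga x + death be th x) * P t x y)).

Definition Zsum_tends (F : R -> Z -> R) (L : R) : Prop :=
  (exists T, forall t, T <= t -> exists e, Zhas_sum (F t) e) /\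
  (forall eps, 0 < eps -> exists T, forall t e, T <= t -> Zhas_sum (F t) e ->
      Rabs (e - L) < eps).

From Stdlib Require Import Reals Lra Lia ZArith.
Open Scope R_scope.

(* Write [w] for the unnormalised stationary weights, [lam]/[mu] for the birth
   and death rates, and [v t z = P t z y] for a fixed target [y].  Detailed
   balance [w z lam z = w (z+1) mu (z+1)] makes [w * generator] a discrete
   divergence, so the stationary mass [sum_z w z v t z = w y] is conserved; in
   particular [w x P t x y <= w y].  The abandonment rates give the uniform
   curvature bound [(lam z - lam (z+1)) + (mu (z+1) - mu z) >= min th ga =: m],
   under which the flux-weighted Dirichlet energy [sum_z w z lam z (grad v)^2]
   satisfies [E' <= -2 m E] up to vanishing boundary terms; by Grönwall every
   gradient decays like [exp (- m t)], so [v t x - v t z -> 0].  Together with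
   mass conservation and dominated convergence this yields [P t x y -> w y / S].
   A second dominated convergence, against the summable majorant
   [w y exp (s |y|) / w x], gives the theorem. *)

(** Symmetric partial sums over [Z]. *)

Definition in_window (N : nat) (z : Z) : Prop := (- Z.of_nat N <= z <= Z.of_nat N)%Z.

Lemma symsum_0 (g : Z -> R) : symsum g 0 = g 0%Z.
Proof. reflexivity. Qed.

Lemma symsum_S (g : Z -> R) (N : nat) :
  symsum g (S N) = symsum g N + g (Z.of_nat (S N)) + g (- Z.of_nat (S N))%Z.
Proof.
  unfold symsum.
  replace (2 * S N)%nat with (S (S (2 * N))) by lia.
  rewrite tech5, decomp_sum by lia.
  change (Init.Nat.pred (S (2 * N))) with (2 * N)%nat.
  replace (sum_f_R0 (fun i => g (Z.of_nat (S i) - Z.of_nat (S N))%Z) (2 * N))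
    with (sum_f_R0 (fun k => g (Z.of_nat k - Z.of_nat N)%Z) (2 * N))
    by (apply sum_eq; intros i _; f_equal; lia).
  replace (Z.of_nat (S (S (2 * N))) - Z.of_nat (S N))%Z with (Z.of_nat (S N)) by lia.
  replace (Z.of_nat 0 - Z.of_nat (S N))%Z with (- Z.of_nat (S N))%Z by lia.
  ring.
Qed.

Lemma symsum_ext (f g : Z -> R) N :
  (forall z, in_window N z -> f z = g z) -> symsum f N = symsum g N.
Proof.
  induction N as [|N IH]; intros H; unfold in_window in *.
  - apply H; lia.
  - rewrite !symsum_S, (H (Z.of_nat (S N))), (H (- Z.of_nat (S N))%Z) by lia.
    rewrite IH; [reflexivity|]. intros z Hz; apply H; lia.
Qed.

Lemma symsum_plus (f g : Z -> R) N :
  symsum (fun z => f z + g z) N = symsum f N + symsum g N.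
Proof. induction N; [reflexivity|]. rewrite !symsum_S, IHN; ring. Qed.

Lemma symsum_minus (f g : Z -> R) N :
  symsum (fun z => f z - g z) N = symsum f N - symsum g N.
Proof. induction N; [reflexivity|]. rewrite !symsum_S, IHN; ring. Qed.

Lemma symsum_scal (c : R) (f : Z -> R) N :
  symsum (fun z => c * f z) N = c * symsum f N.
Proof. induction N; [reflexivity|]. rewrite !symsum_S, IHN; ring. Qed.

Lemma symsum_le (f g : Z -> R) N : (forall z, f z <= g z) -> symsum f N <= symsum g N.
Proof.
  intros H. induction N; [apply H|]. rewrite !symsum_S.
  pose proof (H (Z.of_nat (S N))); pose proof (H (- Z.of_nat (S N))%Z); lra.
Qed.

Lemma symsum_zero (f : Z -> R) N : (forall z, in_window N z -> f z = 0) -> symsum f N = 0.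
Proof.
  intros H. rewrite (symsum_ext f (fun z => 0 * f z)) by (intros z Hz; rewrite H; auto; ring).
  rewrite symsum_scal. ring.
Qed.

Lemma symsum_nonneg (f : Z -> R) N : (forall z, 0 <= f z) -> 0 <= symsum f N.
Proof.
  intros H. rewrite <- (symsum_zero (fun _ => 0) N) by auto. apply symsum_le, H.
Qed.

Lemma symsum_growing (f : Z -> R) : (forall z, 0 <= f z) -> Un_growing (symsum f).
Proof.
  intros H n. rewrite symsum_S.
  pose proof (H (Z.of_nat (S n))); pose proof (H (- Z.of_nat (S n))%Z); lra.
Qed.

Lemma symsum_term (f : Z -> R) N z :
  (forall z, 0 <= f z) -> in_window N z -> f z <= symsum f N.
Proof.
  intros H. induction N as [|N IH]; intros Hz; unfold in_window in Hz.
  - rewrite symsum_0. replace z with 0%Z by lia. lra.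
  - pose proof (symsum_nonneg f N H). rewrite symsum_S.
    pose proof (H (Z.of_nat (S N))); pose proof (H (- Z.of_nat (S N))%Z).
    destruct (Z.eq_dec z (Z.of_nat (S N))) as [->|]; [lra|].
    destruct (Z.eq_dec z (- Z.of_nat (S N))%Z) as [->|]; [lra|].
    assert (f z <= symsum f N) by (apply IH; unfold in_window; lia). lra.
Qed.

Lemma symsum_single (f : Z -> R) y N :
  in_window N y -> (forall z, z <> y -> f z = 0) -> symsum f N = f y.
Proof.
  intros Hy H. induction N as [|N IH]; unfold in_window in Hy.
  - rewrite symsum_0. f_equal. lia.
  - rewrite symsum_S.
    destruct (Z.eq_dec y (Z.of_nat (S N))) as [->|Hne1].
    + rewrite (H (- _)%Z) by lia.
      rewrite symsum_zero by (unfold in_window; intros; apply H; lia). ring.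
    + destruct (Z.eq_dec y (- Z.of_nat (S N))%Z) as [->|Hne2].
      * rewrite (H (Z.of_nat _)) by lia.
        rewrite symsum_zero by (unfold in_window; intros; apply H; lia). ring.
      * rewrite IH, (H (Z.of_nat (S N))), (H (- Z.of_nat (S N))%Z) by (unfold in_window; lia).
        ring.
Qed.

Lemma symsum_telescope_down (H : Z -> R) N :
  symsum (fun z => H z - H (z - 1)%Z) N = H (Z.of_nat N) - H (- Z.of_nat N - 1)%Z.
Proof.
  induction N as [|N IH]; [reflexivity|].
  rewrite symsum_S, IH.
  replace (Z.of_nat (S N) - 1)%Z with (Z.of_nat N) by lia.
  replace (- Z.of_nat N - 1)%Z with (- Z.of_nat (S N))%Z by lia. ring.
Qed.

Lemma symsum_telescope_up (G : Z -> R) N :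
  symsum (fun z => G z - G (z + 1)%Z) N = G (- Z.of_nat N)%Z - G (Z.of_nat N + 1)%Z.
Proof.
  induction N as [|N IH]; [reflexivity|].
  rewrite symsum_S, IH.
  replace (- Z.of_nat (S N) + 1)%Z with (- Z.of_nat N)%Z by lia.
  replace (Z.of_nat N + 1)%Z with (Z.of_nat (S N)) by lia. ring.
Qed.

Lemma symsum_derivable (F F' : Z -> R -> R) t N :
  (forall z, derivable_pt_lim (F z) t (F' z t)) ->
  derivable_pt_lim (fun u => symsum (fun z => F z u) N) t (symsum (fun z => F' z t) N).
Proof.
  intros H. induction N as [|N IH]; [exact (H 0%Z)|].
  rewrite symsum_S.
  apply derivable_pt_lim_ext with
    (f := plus_fct (plus_fct (fun u => symsum (fun z => F z u) N) (F (Z.of_nat (S N))))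
                   (F (- Z.of_nat (S N))%Z)).
  - intros u. unfold plus_fct. rewrite symsum_S. reflexivity.
  - repeat apply derivable_pt_lim_plus; auto.
Qed.

(** Right-continuity at [0], the mean value inequality and Grönwall's lemma. *)

Definition right_cont0 (f : R -> R) : Prop := limit1_in f (fun t => 0 <= t) (f 0) 0.

(* The epsilon-delta form in which [bd_transition] states right-continuity. *)
Lemma right_cont0_intro (f : R -> R) :
  (forall eps, 0 < eps -> exists delta, 0 < delta /\
     forall t, 0 <= t < delta -> Rabs (f t - f 0) < eps) ->
  right_cont0 f.
Proof.
  intros H eps He. destruct (H eps He) as [d [Hd Ht]]. exists d. split; [lra|].
  intros t [Ht0 Hdist]. simpl in *. unfold R_dist in *.
  rewrite Rminus_0_r, Rabs_right in Hdist by lra. apply Ht. lra.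
Qed.

Lemma right_cont0_of_continuity (f : R -> R) : continuity_pt f 0 -> right_cont0 f.
Proof.
  intros H eps He. destruct (H eps He) as [d [Hd Ht]]. exists d. split; [exact Hd|].
  intros t [Ht0 Hdist]. destruct (Req_dec t 0) as [->|Hne].
  - simpl. unfold R_dist. rewrite Rminus_diag, Rabs_R0. lra.
  - apply Ht. repeat split; auto.
Qed.

Lemma right_cont0_ext (f g : R -> R) :
  (forall t, f t = g t) -> right_cont0 f -> right_cont0 g.
Proof.
  intros H Hf eps He. destruct (Hf eps He) as [d [Hd Ht]]. exists d. split; [exact Hd|].
  intros t Hx. rewrite <- !H. apply Ht, Hx.
Qed.

Lemma right_cont0_symsum (F : Z -> R -> R) N :
  (forall z, right_cont0 (F z)) -> right_cont0 (fun t => symsum (fun z => F z t) N).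
Proof.
  intros H. induction N as [|N IH]; [exact (H 0%Z)|].
  apply right_cont0_ext with
    (f := fun t => symsum (fun z => F z t) N + F (Z.of_nat (S N)) t + F (- Z.of_nat (S N))%Z t).
  - intros t. rewrite symsum_S. reflexivity.
  - apply limit_plus; [apply limit_plus|]; [exact IH | apply H | apply H].
Qed.

Lemma right_cont0_lower (f : R -> R) X t :
  right_cont0 f -> 0 < t -> (forall e, 0 < e < t -> X <= f e) -> X <= f 0.
Proof.
  intros Hf Ht H. apply Rnot_lt_le. intros Hc.
  destruct (Hf (X - f 0)) as [d [Hd Hd']]; [lra|].
  set (e := Rmin (d / 2) (t / 2)).
  assert (0 < e) by (apply Rmin_pos; lra).
  pose proof (Rmin_l (d / 2) (t / 2)); pose proof (Rmin_r (d / 2) (t / 2)).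
  specialize (H e ltac:(unfold e in *; lra)).
  assert (Hde : R_dist (f e) (f 0) < X - f 0).
  { apply Hd'. simpl. unfold R_dist. rewrite Rminus_0_r, Rabs_right; unfold e in *; lra. }
  unfold R_dist in Hde. apply Rabs_def2 in Hde. lra.
Qed.

Lemma mvt_upper (f f' : R -> R) t B :
  0 < t -> 0 <= B -> right_cont0 f ->
  (forall c, 0 < c -> derivable_pt_lim f c (f' c)) ->
  (forall c, 0 < c <= t -> f' c <= B) -> f t - f 0 <= B * t.
Proof.
  intros Ht HB0 Hf Hd HB.
  enough (f t - B * t <= f 0) by lra.
  apply (right_cont0_lower f _ t Hf Ht). intros e He.
  destruct (MVT_cor2 f f' e t) as [c [Hc Hc']]; [lra| intros c Hc; apply Hd; lra |].
  specialize (HB c ltac:(lra)).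
  assert (f' c * (t - e) <= B * t) by nra. lra.
Qed.

Lemma mvt_abs (f f' : R -> R) t B :
  0 < t -> right_cont0 f ->
  (forall c, 0 < c -> derivable_pt_lim f c (f' c)) ->
  (forall c, 0 < c <= t -> Rabs (f' c) <= B) -> Rabs (f t - f 0) <= B * t.
Proof.
  intros Ht Hf Hd HB.
  assert (HB0 : 0 <= B) by (pose proof (HB t ltac:(lra)); pose proof (Rabs_pos (f' t)); lra).
  apply Rabs_le. split.
  - enough (- f t - - f 0 <= B * t) by lra.
    apply (mvt_upper (fun u => - f u) (fun u => - f' u)); auto.
    + apply limit_Ropp, Hf.
    + intros c Hc. apply (derivable_pt_lim_opp f), Hd, Hc.
    + intros c Hc. pose proof (Rle_abs (- f' c)). rewrite Rabs_Ropp in *.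
      pose proof (HB c Hc). lra.
  - apply (mvt_upper f f'); auto.
    intros c Hc. pose proof (Rle_abs (f' c)). pose proof (HB c Hc). lra.
Qed.

Lemma exp_scaled_derivable (k t : R) :
  derivable_pt_lim (fun u => exp (k * u)) t (exp (k * t) * k).
Proof.
  apply (derivable_pt_lim_comp (fun u => k * u) exp t k (exp (k * t))).
  - apply derivable_pt_lim_ext with (f := mult_real_fct k id); [reflexivity|].
    replace k with (k * 1) at 2 by ring. apply derivable_pt_lim_scal, derivable_pt_lim_id.
  - apply derivable_pt_lim_exp.
Qed.

Lemma exp_opp_mult (x : R) : exp x * exp (- x) = 1.
Proof. rewrite <- exp_plus, Rplus_opp_r. apply exp_0. Qed.

Lemma gronwall (f f' : R -> R) k b t :
  0 < k -> 0 <= b -> 0 < t -> right_cont0 f ->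
  (forall c, 0 < c -> derivable_pt_lim f c (f' c)) ->
  (forall c, 0 < c -> f' c <= - k * f c + b) ->
  f t <= exp (- (k * t)) * f 0 + b * t.
Proof.
  intros Hk Hb Ht Hf Hd Hineq.
  (* [exp (k u) f u] grows at most linearly, with slope [exp (k t) b]. *)
  pose (g := fun u => exp (k * u) * f u).
  pose (g' := fun u => exp (k * u) * k * f u + exp (k * u) * f' u).
  assert (Hg : g t - g 0 <= exp (k * t) * b * t).
  { apply (mvt_upper g g'); auto.
    - pose proof (exp_pos (k * t)). nra.
    - apply limit_mul; auto. apply right_cont0_of_continuity, derivable_continuous_pt.
      exact (exist _ _ (exp_scaled_derivable k 0)).
    - intros c Hc. apply (derivable_pt_lim_mult (fun u => exp (k * u)) f).
      + apply exp_scaled_derivable.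
      + apply Hd, Hc.
    - intros c Hc. unfold g'. pose proof (Hineq c (proj1 Hc)).
      pose proof (exp_pos (k * c)).
      assert (exp (k * c) <= exp (k * t)).
      { destruct (Req_dec c t) as [->|]; [lra|]. apply Rlt_le, exp_increasing. nra. }
      nra. }
  unfold g in Hg. rewrite Rmult_0_r, exp_0, Rmult_1_l in Hg.
  apply Rmult_le_reg_l with (exp (k * t)); [apply exp_pos|].
  replace (exp (k * t) * (exp (- (k * t)) * f 0 + b * t))
    with ((exp (k * t) * exp (- (k * t))) * f 0 + exp (k * t) * b * t) by ring.
  rewrite exp_opp_mult. lra.
Qed.

Lemma Un_cv_const (c : R) : Un_cv (fun _ => c) c.
Proof.
  intros eps He. exists 0%nat. intros n _. unfold Rdist. rewrite Rminus_diag, Rabs_R0. lra.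
Qed.

Lemma Un_cv_ge (u : nat -> R) l c N0 :
  Un_cv u l -> (forall N, (N0 <= N)%nat -> c <= u N) -> c <= l.
Proof.
  intros Hu H. apply Rnot_lt_le. intros Hc.
  destruct (Hu (c - l)) as [N HN]; [lra|].
  specialize (HN (max N N0) ltac:(lia)). specialize (H (max N N0) ltac:(lia)).
  unfold Rdist in HN. apply Rabs_def2 in HN. lra.
Qed.

Lemma Un_cv_squeeze0 (x q : nat -> R) C :
  0 <= C -> (forall n, 0 <= x n <= C * q n) -> Un_cv q 0 -> Un_cv x 0.
Proof.
  intros HC H Hq eps He. destruct (Hq (eps / (C + 1))) as [K HK].
  { apply Rdiv_lt_0_compat; lra. }
  exists K. intros n Hn. specialize (HK n Hn). specialize (H n). unfold Rdist in *.
  rewrite Rminus_0_r in *. rewrite Rabs_right by lra.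
  pose proof (Rabs_pos (q n)).
  assert (C * q n <= C * Rabs (q n)) by (apply Rmult_le_compat_l; [lra| apply Rle_abs]).
  apply Rle_lt_trans with ((C + 1) * Rabs (q n)); [nra|].
  replace eps with ((C + 1) * (eps / (C + 1))) by (field; lra).
  apply Rmult_lt_compat_l; lra.
Qed.

Lemma symsum_le_lim (f : Z -> R) l N :
  (forall z, 0 <= f z) -> Un_cv (symsum f) l -> symsum f N <= l.
Proof. intros H Hl. apply (growing_ineq (symsum f)); [apply symsum_growing, H | exact Hl]. Qed.

Lemma symsum_term_le_lim (f : Z -> R) l z :
  (forall z, 0 <= f z) -> Un_cv (symsum f) l -> f z <= l.
Proof.
  intros H Hl. apply Rle_trans with (symsum f (Z.abs_nat z)).
  - apply symsum_term; [exact H|]. unfold in_window. lia.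
  - apply symsum_le_lim; assumption.
Qed.

Lemma symsum_bounded_cv (h : Z -> R) M :
  (forall z, 0 <= h z) -> (forall N, symsum h N <= M) -> exists l, Un_cv (symsum h) l.
Proof.
  intros H0 HM. destruct (growing_cv (symsum h)) as [l Hl].
  - apply symsum_growing, H0.
  - exists M. intros x [n ->]. apply HM.
  - exists l. exact Hl.
Qed.

Lemma symsum_boundary_cv0 (h : Z -> R) M :
  (forall z, 0 <= h z) -> (forall N, symsum h N <= M) ->
  Un_cv (fun N => h (Z.of_nat N) + h (- Z.of_nat N)%Z) 0.
Proof.
  intros H0 HM. destruct (symsum_bounded_cv h M H0 HM) as [l Hl].
  intros eps He. destruct (Hl (eps / 2)) as [K HK]; [lra|].
  exists (S K). intros [|n] Hn; [lia|].
  pose proof (HK n ltac:(lia)) as Hn1. pose proof (HK (S n) ltac:(lia)) as Hn2.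
  unfold Rdist in *. rewrite symsum_S in Hn2. rewrite Rminus_0_r.
  apply Rabs_def2 in Hn1. apply Rabs_def2 in Hn2.
  pose proof (H0 (Z.of_nat (S n))). pose proof (H0 (- Z.of_nat (S n))%Z).
  rewrite Rabs_right by lra. lra.
Qed.

Lemma symsum_increment_le (g h : Z -> R) N M :
  (forall z, Rabs (g z) <= h z) -> (N <= M)%nat ->
  Rabs (symsum g M - symsum g N) <= symsum h M - symsum h N.
Proof.
  intros H HNM. induction HNM as [|M HNM IH].
  - rewrite !Rminus_diag, Rabs_R0. lra.
  - rewrite !symsum_S.
    replace (symsum g M + g (Z.of_nat (S M)) + g (- Z.of_nat (S M))%Z - symsum g N)
      with ((symsum g M - symsum g N) + g (Z.of_nat (S M)) + g (- Z.of_nat (S M))%Z) by ring.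
    pose proof (Rabs_triang (symsum g M - symsum g N + g (Z.of_nat (S M)))
                            (g (- Z.of_nat (S M))%Z)).
    pose proof (Rabs_triang (symsum g M - symsum g N) (g (Z.of_nat (S M)))).
    pose proof (H (Z.of_nat (S M))); pose proof (H (- Z.of_nat (S M))%Z). lra.
Qed.

Lemma symsum_tail_bound (g h : Z -> R) lg lh N :
  (forall z, Rabs (g z) <= h z) -> Un_cv (symsum g) lg -> Un_cv (symsum h) lh ->
  Rabs (lg - symsum g N) <= lh - symsum h N.
Proof.
  intros H Hg Hh.
  apply Rle_cv_lim with (Un := fun M => Rabs (symsum g (M + N) - symsum g N))
                        (Vn := fun M => symsum h (M + N) - symsum h N).
  - intros n. apply symsum_increment_le; auto. lia.
  - apply cv_cvabs, CV_minus, Un_cv_const. apply CV_shift', Hg.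
  - apply CV_minus, Un_cv_const. apply CV_shift', Hh.
Qed.

Lemma Zhas_sum_dominated (g h : Z -> R) M :
  (forall z, Rabs (g z) <= h z) -> (forall N, symsum h N <= M) -> exists l, Zhas_sum g l.
Proof.
  intros H HM.
  assert (H0 : forall z, 0 <= h z)
    by (intros z; pose proof (H z); pose proof (Rabs_pos (g z)); lra).
  destruct (symsum_bounded_cv h M H0 HM) as [lh Hlh].
  assert (Hcauchy : Cauchy_crit (symsum g)).
  { pose proof (CV_Cauchy (symsum h) (exist _ lh Hlh)) as Hc.
    intros eps He. destruct (Hc eps He) as [K HK]. exists K. intros n m Hn Hm.
    unfold Rdist in *.
    destruct (le_ge_dec n m) as [Hnm|Hnm].
    - rewrite Rabs_minus_sym. eapply Rle_lt_trans; [apply symsum_increment_le; eauto|].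
      eapply Rle_lt_trans; [apply Rle_abs| apply (HK m n Hm Hn)].
    - eapply Rle_lt_trans; [apply symsum_increment_le; eauto|].
      eapply Rle_lt_trans; [apply Rle_abs| apply (HK n m Hn Hm)]. }
  destruct (R_complete _ Hcauchy) as [l Hl]. exists l. split; [|exact Hl].
  exists M. intros N. eapply Rle_trans; [|apply (HM N)]. apply symsum_le, H.
Qed.

Definition lim_infty (f : R -> R) (l : R) : Prop :=
  forall eps, 0 < eps -> exists T, forall t, T <= t -> Rabs (f t - l) < eps.

Lemma lim_infty_ext (f g : R -> R) l :
  (forall t, f t = g t) -> lim_infty f l -> lim_infty g l.
Proof.
  intros H Hf eps He. destruct (Hf eps He) as [T HT]. exists T. intros t Ht.
  rewrite <- H. auto.
Qed.

Lemma lim_infty_plus (f g : R -> R) a b :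
  lim_infty f a -> lim_infty g b -> lim_infty (fun t => f t + g t) (a + b).
Proof.
  intros Hf Hg eps He.
  destruct (Hf (eps / 2)) as [T1 H1]; [lra|]. destruct (Hg (eps / 2)) as [T2 H2]; [lra|].
  exists (Rmax T1 T2). intros t Ht.
  pose proof (Rmax_l T1 T2); pose proof (Rmax_r T1 T2).
  specialize (H1 t ltac:(lra)); specialize (H2 t ltac:(lra)).
  replace (f t + g t - (a + b)) with ((f t - a) + (g t - b)) by ring.
  pose proof (Rabs_triang (f t - a) (g t - b)). lra.
Qed.

Lemma lim_infty_scal (c : R) (f : R -> R) l :
  lim_infty f l -> lim_infty (fun t => c * f t) (c * l).
Proof.
  intros H eps He. destruct (H (eps / (Rabs c + 1))) as [T HT].
  { apply Rdiv_lt_0_compat; [lra|]. pose proof (Rabs_pos c); lra. }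
  exists T. intros t Ht. specialize (HT t Ht).
  replace (c * f t - c * l) with (c * (f t - l)) by ring. rewrite Rabs_mult.
  pose proof (Rabs_pos c). pose proof (Rabs_pos (f t - l)).
  apply Rle_lt_trans with ((Rabs c + 1) * Rabs (f t - l)); [nra|].
  replace eps with ((Rabs c + 1) * (eps / (Rabs c + 1))) by (field; lra).
  apply Rmult_lt_compat_l; lra.
Qed.

Lemma lim_infty_symsum (F : Z -> R -> R) (G : Z -> R) N :
  (forall z, lim_infty (F z) (G z)) ->
  lim_infty (fun t => symsum (fun z => F z t) N) (symsum G N).
Proof.
  intros H. induction N as [|N IH]; [exact (H 0%Z)|].
  rewrite symsum_S.
  apply lim_infty_ext with
    (f := fun t => symsum (fun z => F z t) N + F (Z.of_nat (S N)) t + F (- Z.of_nat (S N))%Z t).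
  - intros t. rewrite symsum_S. reflexivity.
  - repeat apply lim_infty_plus; auto.
Qed.

Lemma lim_infty_of_square_decay (q : R -> R) c K T0 :
  0 < c -> 0 <= K -> (forall t, T0 <= t -> q t * q t <= exp (- (c * t)) * K) ->
  lim_infty q 0.
Proof.
  intros Hc HK Hq eps He.
  exists (Rmax T0 (K / (c * (eps * eps)) + 1)). intros t Ht.
  pose proof (Rmax_l T0 (K / (c * (eps * eps)) + 1)).
  pose proof (Rmax_r T0 (K / (c * (eps * eps)) + 1)).
  assert (Hce : 0 < c * (eps * eps)) by (apply Rmult_lt_0_compat; nra).
  assert (HKt : K < eps * eps * (c * t)).
  { assert (0 <= K / (c * (eps * eps)))
      by (apply Rmult_le_pos; [lra| apply Rlt_le, Rinv_0_lt_compat; lra]).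
    replace K with (c * (eps * eps) * (K / (c * (eps * eps)))) at 1 by (field; nra).
    nra. }
  assert (Hexp : K * exp (- (c * t)) < eps * eps).
  { pose proof (exp_ineq1_le (c * t)). pose proof (exp_opp_mult (c * t)).
    pose proof (exp_pos (- (c * t))). pose proof (exp_pos (c * t)).
    assert (K < eps * eps * exp (c * t)) by nra.
    apply Rmult_lt_reg_r with (exp (c * t)); [lra|].
    replace (K * exp (- (c * t)) * exp (c * t)) with (K * (exp (c * t) * exp (- (c * t)))) by ring.
    nra. }
  specialize (Hq t ltac:(lra)). rewrite Rminus_0_r.
  apply Rnot_le_lt. intros Hge.
  pose proof (Rabs_pos (q t)).
  assert (eps * eps <= Rabs (q t) * Rabs (q t)) by nra.
  rewrite <- Rabs_mult, Rabs_right in * by (apply Rle_ge; nra). lra.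
Qed.

Lemma dominated_convergence (F : R -> Z -> R) (G h : Z -> R) M T0 lG :
  (forall N, symsum h N <= M) ->
  (forall t z, T0 <= t -> Rabs (F t z) <= h z) ->
  (forall z, lim_infty (fun t => F t z) (G z)) ->
  Un_cv (symsum G) lG ->
  forall eps, 0 < eps -> exists T, forall t e, T <= t -> Un_cv (symsum (F t)) e ->
    Rabs (e - lG) < eps.
Proof.
  intros HM Hdom Hlim HG eps He.
  assert (Hh0 : forall z, 0 <= h z)
    by (intros z; pose proof (Hdom T0 z (Rle_refl _)); pose proof (Rabs_pos (F T0 z)); lra).
  destruct (symsum_bounded_cv h M Hh0 HM) as [lh Hlh].
  assert (HGdom : forall z, Rabs (G z) <= h z).
  { intros z. apply Rnot_lt_le. intros Hc.
    destruct (Hlim z (Rabs (G z) - h z)) as [T HT]; [lra|].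
    specialize (HT (Rmax T T0) (Rmax_l _ _)). specialize (Hdom (Rmax T T0) z (Rmax_r _ _)).
    pose proof (Rabs_triang_inv (G z) (F (Rmax T T0) z)). rewrite Rabs_minus_sym in HT. lra. }
  destruct (Hlh (eps / 3)) as [N HN]; [lra|]. specialize (HN N (le_n _)).
  unfold Rdist in HN. apply Rabs_def2 in HN.
  destruct (lim_infty_symsum (fun z t => F t z) G N Hlim (eps / 3)) as [T1 HT1]; [lra|].
  exists (Rmax T1 T0). intros t e Ht HFt.
  pose proof (Rmax_l T1 T0); pose proof (Rmax_r T1 T0).
  pose proof (symsum_tail_bound (F t) h e lh N (fun z => Hdom t z ltac:(lra)) HFt Hlh).
  pose proof (symsum_tail_bound G h lG lh N HGdom HG Hlh).
  specialize (HT1 t ltac:(lra)). change (fun z => F t z) with (F t) in HT1.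
  replace (e - lG)
    with ((e - symsum (F t) N) + (symsum (F t) N - symsum G N) + - (lG - symsum G N)) by ring.
  pose proof (Rabs_triang (e - symsum (F t) N + (symsum (F t) N - symsum G N))
                          (- (lG - symsum G N))).
  pose proof (Rabs_triang (e - symsum (F t) N) (symsum (F t) N - symsum G N)).
  rewrite Rabs_Ropp in *. lra.
Qed.

(** Birth–death chains on [Z] in detailed balance. *)

Section DetailedBalance.
Variables (lam mu w : Z -> R).
Hypothesis w_pos : forall z, 0 < w z.
Hypothesis lam_pos : forall z, 0 < lam z.
Hypothesis mu_nonneg : forall z, 0 <= mu z.
Hypothesis detailed_balance : forall z, w z * lam z = w (z + 1)%Z * mu (z + 1)%Z.

Definition generator (g : Z -> R) (z : Z) : R :=
  lam z * g (z + 1)%Z + mu z * g (z - 1)%Z - (lam z + mu z) * g z.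

Definition flux (z : Z) : R := w z * lam z.

Lemma flux_pos z : 0 < flux z.
Proof. unfold flux. pose proof (w_pos z); pose proof (lam_pos z). nra. Qed.

Lemma flux_pred z : flux (z - 1)%Z = w z * mu z.
Proof. unfold flux. rewrite detailed_balance. f_equal; f_equal; ring. Qed.

(* Detailed balance turns [w * generator g] into a discrete divergence. *)
Lemma weighted_generator (g : Z -> R) z :
  w z * generator g z
  = flux z * (g (z + 1)%Z - g z) - flux (z - 1)%Z * (g (z - 1 + 1)%Z - g (z - 1)%Z).
Proof.
  rewrite flux_pred. replace (z - 1 + 1)%Z with z by ring.
  unfold generator, flux. ring.
Qed.

(* A bounded solution of the backward equation, e.g. [t |-> P t . y]. *)
Section BackwardSolution.
Variable v : R -> Z -> R.
Hypothesis sol_range : forall t z, 0 <= t -> 0 <= v t z <= 1.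
Hypothesis sol_cont : forall z, right_cont0 (fun t => v t z).
Hypothesis sol_deriv :
  forall t z, 0 < t -> derivable_pt_lim (fun u => v u z) t (generator (v t) z).

Definition grad (t : R) (z : Z) : R := v t (z + 1)%Z - v t z.

Lemma grad_abs_le t z : 0 <= t -> Rabs (grad t z) <= 1.
Proof.
  intros Ht. unfold grad. pose proof (sol_range t (z + 1)%Z Ht); pose proof (sol_range t z Ht).
  apply Rabs_le; lra.
Qed.

Lemma weighted_grad_sq_bound c t z :
  0 <= c -> 0 <= t -> 0 <= c * (grad t z * grad t z) <= c.
Proof.
  intros Hc Ht.
  assert (-1 <= grad t z <= 1).
  { unfold grad. pose proof (sol_range t (z + 1)%Z Ht); pose proof (sol_range t z Ht). lra. }
  assert (0 <= (1 - grad t z) * (1 + grad t z)) by (apply Rmult_le_pos; lra).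
  assert (0 <= grad t z * grad t z) by apply Rle_0_sqr.
  split; nra.
Qed.

Lemma weighted_mass_drift N t :
  0 < t ->
  Rabs (symsum (fun z => w z * v t z) N - symsum (fun z => w z * v 0 z) N)
  <= (flux (Z.of_nat N) + flux (- Z.of_nat N - 1)%Z) * t.
Proof.
  intros Ht.
  apply (mvt_abs (fun u => symsum (fun z => w z * v u z) N)
                 (fun c => symsum (fun z => w z * generator (v c) z) N)); auto.
  - apply (right_cont0_symsum (fun z u => w z * v u z)). intros z.
    apply limit_mul; [exact (limit_free (fun _ => w z) _ 0 0) | apply sol_cont].
  - intros c Hc.
    apply (symsum_derivable (fun z u => w z * v u z) (fun z c => w z * generator (v c) z)).
    intros z. apply derivable_pt_lim_ext with (f := mult_real_fct (w z) (fun u => v u z));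
      [reflexivity|].
    apply derivable_pt_lim_scal, sol_deriv, Hc.
  - intros c Hc.
    set (H := fun z => flux z * (v c (z + 1)%Z - v c z)).
    rewrite (symsum_ext _ (fun z => H z - H (z - 1)%Z))
      by (intros z _; apply weighted_generator).
    rewrite symsum_telescope_down.
    assert (HH : forall z, Rabs (H z) <= flux z).
    { intros z. unfold H. rewrite Rabs_mult, Rabs_right by (apply Rle_ge, Rlt_le, flux_pos).
      pose proof (flux_pos z). pose proof (grad_abs_le c z ltac:(lra)). unfold grad in *.
      rewrite <- (Rmult_1_r (flux z)) at 2. apply Rmult_le_compat_l; lra. }
    pose proof (Rabs_triang (H (Z.of_nat N)) (- H (- Z.of_nat N - 1)%Z)).
    rewrite Rabs_Ropp in *.
    pose proof (HH (Z.of_nat N)). pose proof (HH (- Z.of_nat N - 1)%Z). unfold Rminus. lra.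
Qed.

(* Energy dissipation: under the curvature condition [m <= (lam z - lam (z+1))
   + (mu (z+1) - mu z)], the flux-weighted Dirichlet energy of the solution decays
   at rate [2 m], up to boundary terms. *)
Section GradientDecay.
Variables (m Ma : R).
Hypothesis curvature_pos : 0 < m.
Hypothesis curvature : forall z, m <= lam z - lam (z + 1)%Z + mu (z + 1)%Z - mu z.
Hypothesis flux_bounded : forall N, symsum flux N <= Ma.

Definition energy (N : nat) (t : R) : R := symsum (fun z => flux z * (grad t z * grad t z)) N.

Definition grad' (t : R) (z : Z) : R := generator (v t) (z + 1)%Z - generator (v t) z.

Definition forward_energy (t : R) (z : Z) : R :=
  flux z * lam (z + 1)%Z * (grad t (z + 1)%Z * grad t (z + 1)%Z).
Definition backward_energy (t : R) (z : Z) : R :=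
  flux z * mu z * (grad t (z - 1)%Z * grad t (z - 1)%Z).

Definition boundary_flux (N : nat) : R :=
  flux (Z.of_nat N) * lam (Z.of_nat N + 1)%Z + flux (- Z.of_nat N)%Z * mu (- Z.of_nat N)%Z.

Hypothesis boundary_flux_cv0 : Un_cv boundary_flux 0.

Lemma energy_derivable N t :
  0 < t -> derivable_pt_lim (energy N) t (symsum (fun z => flux z * (2 * grad t z * grad' t z)) N).
Proof.
  intros Ht.
  apply (symsum_derivable (fun z u => flux z * (grad u z * grad u z))
                          (fun z t => flux z * (2 * grad t z * grad' t z))).
  intros z.
  assert (Hgrad : derivable_pt_lim (fun u => grad u z) t (grad' t z)).
  { apply (derivable_pt_lim_minus (fun u => v u (z + 1)%Z) (fun u => v u z)); apply sol_deriv, Ht. }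
  replace (flux z * (2 * grad t z * grad' t z))
    with (flux z * (grad' t z * grad t z + grad t z * grad' t z)) by ring.
  apply derivable_pt_lim_ext with
    (f := mult_real_fct (flux z) (mult_fct (fun u => grad u z) (fun u => grad u z)));
    [reflexivity|].
  apply derivable_pt_lim_scal, derivable_pt_lim_mult; exact Hgrad.
Qed.

(* The local dissipation inequality: a sum of squares identity in disguise. *)
Lemma dissipation_local t z :
  flux z * (2 * grad t z * grad' t z)
  <= -2 * m * (flux z * (grad t z * grad t z))
     + (forward_energy t z - forward_energy t (z - 1)%Z)
     + (backward_energy t z - backward_energy t (z + 1)%Z).
Proof.
  assert (E1 : flux (z - 1)%Z * lam z = flux z * mu z) by (rewrite flux_pred; unfold flux; ring).
  assert (E2 : flux (z + 1)%Z * mu (z + 1)%Z = flux z * lam (z + 1)%Z)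
    by (unfold flux; rewrite (detailed_balance z); ring).
  unfold forward_energy, backward_energy, grad', generator, grad.
  replace (z - 1 + 1)%Z with z by ring. replace (z + 1 - 1)%Z with z by ring.
  set (v0 := v t z). set (v1 := v t (z + 1)%Z).
  set (v2 := v t (z + 1 + 1)%Z). set (vm := v t (z - 1)%Z).
  rewrite E1, E2.
  pose proof (flux_pos z). pose proof (lam_pos (z + 1)%Z). pose proof (mu_nonneg z).
  pose proof (curvature z).
  assert (0 <= flux z * lam (z + 1)%Z * (((v1 - v0) - (v2 - v1)) * ((v1 - v0) - (v2 - v1)))).
  { apply Rmult_le_pos; [apply Rmult_le_pos; lra | apply Rle_0_sqr]. }
  assert (0 <= flux z * mu z * (((v1 - v0) - (v0 - vm)) * ((v1 - v0) - (v0 - vm)))).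
  { apply Rmult_le_pos; [apply Rmult_le_pos; lra | apply Rle_0_sqr]. }
  assert (0 <= flux z * (lam z - lam (z + 1)%Z + mu (z + 1)%Z - mu z - m)
                * ((v1 - v0) * (v1 - v0))).
  { apply Rmult_le_pos; [apply Rmult_le_pos; lra | apply Rle_0_sqr]. }
  nra.
Qed.

(* Summing the local inequality over the window, the transport terms telescope
   and only the energy entering through the boundary remains. *)
Lemma energy_dissipation N t :
  0 < t ->
  symsum (fun z => flux z * (2 * grad t z * grad' t z)) N <= -2 * m * energy N t + boundary_flux N.
Proof.
  intros Ht. eapply Rle_trans; [apply symsum_le; intros z; apply dissipation_local|].
  rewrite !symsum_plus, symsum_telescope_down, symsum_telescope_up, symsum_scal.
  fold (energy N t). unfold boundary_flux, forward_energy, backward_energy.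
  replace (- Z.of_nat N - 1 + 1)%Z with (- Z.of_nat N)%Z by ring.
  replace (Z.of_nat N + 1 - 1)%Z with (Z.of_nat N) by ring.
  assert (Hw : forall c z, 0 <= c -> 0 <= c * (grad t z * grad t z) <= c)
    by (intros; apply weighted_grad_sq_bound; lra).
  pose proof (flux_pos (Z.of_nat N)). pose proof (flux_pos (- Z.of_nat N)%Z).
  pose proof (flux_pos (- Z.of_nat N - 1)%Z). pose proof (flux_pos (Z.of_nat N + 1)%Z).
  pose proof (lam_pos (Z.of_nat N + 1)%Z). pose proof (lam_pos (- Z.of_nat N)%Z).
  pose proof (mu_nonneg (- Z.of_nat N)%Z). pose proof (mu_nonneg (Z.of_nat N + 1)%Z).
  pose proof (Hw (flux (Z.of_nat N) * lam (Z.of_nat N + 1)%Z) (Z.of_nat N + 1)%Z ltac:(nra)).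
  pose proof (Hw (flux (- Z.of_nat N)%Z * mu (- Z.of_nat N)%Z) (- Z.of_nat N - 1)%Z ltac:(nra)).
  pose proof (Hw (flux (- Z.of_nat N - 1)%Z * lam (- Z.of_nat N)%Z) (- Z.of_nat N)%Z ltac:(nra)).
  pose proof (Hw (flux (Z.of_nat N + 1)%Z * mu (Z.of_nat N + 1)%Z) (Z.of_nat N) ltac:(nra)).
  lra.
Qed.

(* Gradients are bounded by [1], so the initial energy is at most [Ma]. *)
Lemma energy_initial_le N : energy N 0 <= Ma.
Proof.
  eapply Rle_trans; [|apply (flux_bounded N)]. apply symsum_le. intros z.
  apply weighted_grad_sq_bound; [apply Rlt_le, flux_pos | lra].
Qed.

Lemma energy_decay N t : 0 < t -> energy N t <= exp (- (2 * m * t)) * Ma + boundary_flux N * t.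
Proof.
  intros Ht.
  assert (Hb : 0 <= boundary_flux N).
  { unfold boundary_flux.
    pose proof (flux_pos (Z.of_nat N)). pose proof (flux_pos (- Z.of_nat N)%Z).
    pose proof (lam_pos (Z.of_nat N + 1)%Z). pose proof (mu_nonneg (- Z.of_nat N)%Z). nra. }
  eapply Rle_trans.
  - apply (gronwall (energy N) (fun c => symsum (fun z => flux z * (2 * grad c z * grad' c z)) N)
             (2 * m) (boundary_flux N) t); try lra.
    + apply (right_cont0_symsum (fun z u => flux z * (grad u z * grad u z))). intros z.
      apply limit_mul; [exact (limit_free (fun _ => flux z) _ 0 0)|].
      unfold grad. apply limit_mul; apply limit_minus; apply sol_cont.
    + apply energy_derivable.
    + intros c Hc. pose proof (energy_dissipation N c Hc). lra.
  - pose proof (energy_initial_le N). pose proof (exp_pos (- (2 * m * t))).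
    apply Rplus_le_compat_r, Rmult_le_compat_l; lra.
Qed.

Lemma gradient_decay z t : 0 < t -> flux z * (grad t z * grad t z) <= exp (- (2 * m * t)) * Ma.
Proof.
  intros Ht.
  apply (Un_cv_ge (fun N => exp (- (2 * m * t)) * Ma + boundary_flux N * t) _ _ (Z.abs_nat z)).
  - pose proof (CV_plus _ _ _ _ (Un_cv_const (exp (- (2 * m * t)) * Ma))
                  (CV_mult _ _ _ _ boundary_flux_cv0 (Un_cv_const t))) as Hcv.
    rewrite Rmult_0_l, Rplus_0_r in Hcv. exact Hcv.
  - intros N HN. eapply Rle_trans; [|apply (energy_decay N t Ht)].
    apply (symsum_term (fun z => flux z * (grad t z * grad t z))).
    + intros z'. apply weighted_grad_sq_bound; [apply Rlt_le, flux_pos | lra].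
    + unfold in_window. lia.
Qed.

Lemma grad_tends_0 z : lim_infty (fun t => grad t z) 0.
Proof.
  pose proof (flux_pos z) as Hf.
  assert (HMa : 0 <= Ma).
  { eapply Rle_trans; [|apply (flux_bounded 0)].
    apply symsum_nonneg. intros; apply Rlt_le, flux_pos. }
  apply (lim_infty_of_square_decay _ (2 * m) (Ma / flux z) 1); [lra| |].
  { apply Rmult_le_pos; [lra| apply Rlt_le, Rinv_0_lt_compat; lra]. }
  intros t Ht. pose proof (gradient_decay z t ltac:(lra)).
  apply Rmult_le_reg_l with (flux z); [exact Hf|].
  replace (flux z * (exp (- (2 * m * t)) * (Ma / flux z))) with (exp (- (2 * m * t)) * Ma)
    by (field; lra).
  exact H.
Qed.

(* Consequently the solution forgets its starting point: increments over [k]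
   edges are sums of [k] gradients. *)
Lemma forward_increment_tends_0 x k : lim_infty (fun t => v t (x + Z.of_nat k)%Z - v t x) 0.
Proof.
  induction k as [|k IH].
  - intros eps He. exists 0. intros t _.
    rewrite Z.add_0_r, Rminus_diag, Rminus_0_r, Rabs_R0. exact He.
  - replace 0 with (0 + 0) by ring.
    apply lim_infty_ext
      with (f := fun t => grad t (x + Z.of_nat k)%Z + (v t (x + Z.of_nat k)%Z - v t x)).
    + intros t. unfold grad.
      replace (x + Z.of_nat k + 1)%Z with (x + Z.of_nat (S k))%Z by lia. ring.
    + apply lim_infty_plus; [apply grad_tends_0 | exact IH].
Qed.

Lemma increment_tends_0 x z : lim_infty (fun t => v t x - v t z) 0.
Proof.
  destruct (Z_le_gt_dec z x).
  - apply lim_infty_ext with (f := fun t => v t (z + Z.of_nat (Z.to_nat (x - z)))%Z - v t z).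
    + intros t. replace (z + Z.of_nat (Z.to_nat (x - z)))%Z with x by lia. reflexivity.
    + apply forward_increment_tends_0.
  - replace 0 with (-1 * 0) by ring.
    apply lim_infty_ext
      with (f := fun t => -1 * (v t (x + Z.of_nat (Z.to_nat (z - x)))%Z - v t x)).
    + intros t. replace (x + Z.of_nat (Z.to_nat (z - x)))%Z with z by lia. ring.
    + apply lim_infty_scal, forward_increment_tends_0.
Qed.

End GradientDecay.

(* Started from the indicator of [y], the solution preserves the stationary mass
   [w y]; with the coupling property of [GradientDecay] this forces convergence
   to the normalised stationary weight. *)
Section Stationarity.
Variable y : Z.
Hypothesis sol_init : forall z, v 0 z = if Z.eq_dec z y then 1 else 0.
Hypothesis boundary_mass_cv0 :
  Un_cv (fun N => flux (Z.of_nat N) + flux (- Z.of_nat N - 1)%Z) 0.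

(* Letting the window grow, the boundary fluxes vanish and
   [sum_z w z v t z = w y]. *)
Lemma weighted_mass_conserved t : 0 <= t -> Un_cv (symsum (fun z => w z * v t z)) (w y).
Proof.
  intros Ht.
  assert (Hinit : forall N, in_window N y -> symsum (fun z => w z * v 0 z) N = w y).
  { intros N HN. rewrite (symsum_single _ y); auto.
    - rewrite sol_init. destruct Z.eq_dec; [ring| contradiction].
    - intros z Hz. rewrite sol_init. destruct Z.eq_dec; [contradiction| ring]. }
  destruct (Req_dec t 0) as [->|Ht0].
  { intros eps He. exists (Z.abs_nat y). intros N HN. unfold Rdist.
    rewrite Hinit by (unfold in_window; lia). rewrite Rminus_diag, Rabs_R0. exact He. }
  intros eps He.
  destruct (boundary_mass_cv0 (eps / (t + 1))) as [K HK]; [apply Rdiv_lt_0_compat; lra|].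
  exists (max K (Z.abs_nat y)). intros N HN. unfold Rdist.
  rewrite <- (Hinit N) by (unfold in_window; lia).
  eapply Rle_lt_trans; [apply weighted_mass_drift; lra|].
  specialize (HK N ltac:(lia)). unfold Rdist in HK. rewrite Rminus_0_r in HK.
  pose proof (Rle_abs (flux (Z.of_nat N) + flux (- Z.of_nat N - 1)%Z)).
  apply Rle_lt_trans with (eps / (t + 1) * t); [apply Rmult_le_compat_r; lra|].
  apply Rlt_le_trans with (eps / (t + 1) * (t + 1)).
  - apply Rmult_lt_compat_l; [apply Rdiv_lt_0_compat|]; lra.
  - right. field. lra.
Qed.

Lemma solution_dominated x t : 0 <= t -> w x * v t x <= w y.
Proof.
  intros Ht. apply (symsum_term_le_lim (fun z => w z * v t z)).
  - intros z. pose proof (w_pos z). pose proof (sol_range t z Ht). nra.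
  - apply weighted_mass_conserved, Ht.
Qed.

(* If moreover [sum w = S] and the solution forgets its starting point, then
   [v t x -> w y / S]: indeed [S v t x - w y = sum_z w z (v t x - v t z) -> 0]
   by dominated convergence. *)
Lemma solution_limit (S : R) x :
  Un_cv (symsum w) S -> (forall z, lim_infty (fun t => v t x - v t z) 0) ->
  lim_infty (fun t => v t x) (w y / S).
Proof.
  intros HS Hforget eps He.
  assert (Hw0 : forall z, 0 <= w z) by (intros z; apply Rlt_le, w_pos).
  assert (HS0 : 0 < S)
    by (pose proof (symsum_term_le_lim w S 0%Z Hw0 HS); pose proof (w_pos 0%Z); lra).
  destruct (dominated_convergence (fun t z => w z * (v t x - v t z)) (fun _ => 0) w S 0 0)
    with (eps := eps * S) as [T HT].
  - intros N. apply symsum_le_lim; assumption.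
  - intros t z Ht. rewrite Rabs_mult, (Rabs_right (w z)) by (apply Rle_ge, Hw0).
    pose proof (sol_range t x Ht); pose proof (sol_range t z Ht). pose proof (w_pos z).
    assert (Rabs (v t x - v t z) <= 1) by (apply Rabs_le; lra). nra.
  - intros z. replace 0 with (w z * 0) by ring. apply lim_infty_scal, Hforget.
  - apply Un_cv_ext with (un := fun _ => 0); [|apply Un_cv_const].
    intros n. symmetry. apply symsum_zero. auto.
  - nra.
  - exists (Rmax T 0). intros t Ht. pose proof (Rmax_l T 0); pose proof (Rmax_r T 0).
    assert (Hsum : Un_cv (symsum (fun z => w z * (v t x - v t z))) (v t x * S - w y)).
    { apply Un_cv_ext with (un := fun N => v t x * symsum w N - symsum (fun z => w z * v t z) N).
      - intros n. rewrite <- symsum_scal, <- symsum_minus. apply symsum_ext. intros; ring.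
      - apply CV_minus; [apply CV_mult; [apply Un_cv_const | exact HS]|].
        apply weighted_mass_conserved. lra. }
    specialize (HT t _ ltac:(lra) Hsum). rewrite Rminus_0_r in HT.
    replace (v t x - w y / S) with ((v t x * S - w y) / S) by (field; lra).
    unfold Rdiv. rewrite Rabs_mult, Rabs_inv, (Rabs_right S) by lra.
    apply Rmult_lt_reg_r with S; [exact HS0|]. rewrite Rmult_assoc, Rinv_l by lra. lra.
Qed.

End Stationarity.
End BackwardSolution.
End DetailedBalance.

(** The double-ended queue: rates [lam i = al + i^- ga], [mu i = be + i^+ th]. *)

Lemma wprod_pos c d e n : 0 < c -> 0 < d -> 0 < e -> 0 < wprod c d e n.
Proof.
  intros Hc Hd He. induction n as [|n IH]; cbn [wprod]; [lra|].
  apply Rmult_lt_0_compat; [exact IH|]. apply Rdiv_lt_0_compat; [exact Hc|].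
  pose proof (pos_INR (S n)). nra.
Qed.

Lemma wprod_exp_halving c d e s :
  0 < c -> 0 < d -> 0 < e ->
  exists K, forall n, (K <= n)%nat ->
    wprod c d e (S n) * exp (s * INR (S n)) <= wprod c d e n * exp (s * INR n) / 2.
Proof.
  intros Hc Hd He.
  destruct (archimed (2 * c * exp s / e)) as [Hup _].
  exists (Z.to_nat (up (2 * c * exp s / e))). intros n Hn.
  assert (HK : 2 * c * exp s <= INR (S n) * e).
  { apply Rmult_le_reg_r with (/ e); [apply Rinv_0_lt_compat; lra|].
    replace (INR (S n) * e * / e) with (INR (S n)) by (field; lra).
    apply Rle_trans with (IZR (up (2 * c * exp s / e))); [unfold Rdiv in Hup; lra|].
    rewrite INR_IZR_INZ. apply IZR_le. lia. }
  assert (Hden : 0 < d + INR (S n) * e) by (pose proof (pos_INR (S n)); nra).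
  assert (Hfac : c / (d + INR (S n) * e) * exp s <= 1 / 2).
  { apply Rmult_le_reg_r with (d + INR (S n) * e); [exact Hden|].
    replace (c / (d + INR (S n) * e) * exp s * (d + INR (S n) * e)) with (c * exp s)
      by (field; lra).
    lra. }
  pose proof (wprod_pos c d e n Hc Hd He). pose proof (exp_pos (s * INR n)).
  cbn [wprod].
  replace (exp (s * INR (S n))) with (exp (s * INR n) * exp s)
    by (rewrite <- exp_plus, S_INR; f_equal; ring).
  replace (wprod c d e n * (c / (d + INR (S n) * e)) * (exp (s * INR n) * exp s))
    with ((wprod c d e n * exp (s * INR n)) * (c / (d + INR (S n) * e) * exp s)) by ring.
  assert (0 < wprod c d e n * exp (s * INR n)) by nra. nra.
Qed.

Lemma halving_sum_bounded (p : nat -> R) K :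
  (forall n, 0 <= p n) -> (forall n, (K <= n)%nat -> p (S n) <= p n / 2) ->
  forall n, sum_f_R0 p n <= sum_f_R0 p K + p K.
Proof.
  intros H0 HK.
  assert (Hafter : forall j, sum_f_R0 p (K + j) + p (K + j)%nat <= sum_f_R0 p K + p K).
  { induction j as [|j IH]; [rewrite Nat.add_0_r; lra|].
    replace (K + S j)%nat with (S (K + j)) by lia. rewrite tech5.
    specialize (HK (K + j)%nat ltac:(lia)). lra. }
  intros n. destruct (le_lt_dec K n) as [HKn|HnK].
  - specialize (Hafter (n - K)%nat). replace (K + (n - K))%nat with n in Hafter by lia.
    pose proof (H0 n). lra.
  - pose proof (H0 K).
    enough (sum_f_R0 p n <= sum_f_R0 p K) by lra.
    replace K with (n + (K - n))%nat by lia. generalize (K - n)%nat. intros j.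
    induction j as [|j IH]; [rewrite Nat.add_0_r; lra|].
    replace (n + S j)%nat with (S (n + j)) by lia. rewrite tech5.
    pose proof (H0 (S (n + j))). lra.
Qed.

Lemma symsum_le_halves (g : Z -> R) N :
  (forall z, 0 <= g z) ->
  symsum g N <= sum_f_R0 (fun n => g (Z.of_nat n)) N + sum_f_R0 (fun n => g (- Z.of_nat n)%Z) N.
Proof.
  intros H. induction N as [|N IH].
  - rewrite symsum_0. simpl. pose proof (H 0%Z). lra.
  - rewrite symsum_S, !tech5. lra.
Qed.

Lemma Z_nat_or_neg (z : Z) : (exists n, z = Z.of_nat n) \/ (exists n, z = (- Z.of_nat (S n))%Z).
Proof.
  destruct (Z_le_gt_dec 0 z).
  - left. exists (Z.to_nat z). lia.
  - right. exists (Z.to_nat (- z - 1)). lia.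
Qed.

Lemma Rabs_IZR_nat n : Rabs (IZR (Z.of_nat n)) = INR n.
Proof. rewrite <- INR_IZR_INZ. apply Rabs_right, Rle_ge, pos_INR. Qed.

Lemma Rabs_IZR_neg n : Rabs (IZR (- Z.of_nat n)) = INR n.
Proof. rewrite opp_IZR, Rabs_Ropp. apply Rabs_IZR_nat. Qed.

Lemma exp_ge_1 x : 0 <= x -> 1 <= exp x.
Proof. intros Hx. pose proof (exp_ineq1_le x). lra. Qed.

Section Rates.
Variables al be th ga : R.
Hypotheses (al_pos : 0 < al) (be_pos : 0 < be) (th_pos : 0 < th) (ga_pos : 0 < ga).

Local Notation w := (stat_weight al be th ga).
Local Notation lam := (birth al ga).
Local Notation mu := (death be th).

Lemma stat_weight_nat n : w (Z.of_nat n) = wprod al be th n.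
Proof.
  unfold stat_weight. destruct (Z.leb_spec 0 (Z.of_nat n)); [|lia]. rewrite Nat2Z.id. reflexivity.
Qed.

Lemma stat_weight_neg n : w (- Z.of_nat n)%Z = wprod be al ga n.
Proof.
  unfold stat_weight. destruct (Z.leb_spec 0 (- Z.of_nat n)).
  - replace n with 0%nat by lia. reflexivity.
  - rewrite Z.opp_involutive, Nat2Z.id. reflexivity.
Qed.

Lemma stat_weight_pos z : 0 < w z.
Proof. unfold stat_weight. destruct (0 <=? z)%Z; apply wprod_pos; assumption. Qed.

Lemma zpos_nat n : zpos (Z.of_nat n) = INR n.
Proof. unfold zpos. rewrite Z.max_r, INR_IZR_INZ by lia. reflexivity. Qed.

Lemma zneg_nat n : zneg (Z.of_nat n) = 0.
Proof. unfold zneg. rewrite Z.max_l by lia. reflexivity. Qed.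

Lemma zpos_neg n : zpos (- Z.of_nat n)%Z = 0.
Proof. unfold zpos. rewrite Z.max_l by lia. reflexivity. Qed.

Lemma zneg_neg n : zneg (- Z.of_nat n)%Z = INR n.
Proof. unfold zneg. rewrite Z.max_r, Z.opp_involutive, INR_IZR_INZ by lia. reflexivity. Qed.

Lemma birth_pos z : 0 < lam z.
Proof.
  unfold birth, zneg. pose proof (IZR_le 0 (Z.max 0 (- z)) ltac:(lia)). nra.
Qed.

Lemma death_nonneg z : 0 <= mu z.
Proof.
  unfold death, zpos. pose proof (IZR_le 0 (Z.max 0 z) ltac:(lia)). nra.
Qed.

Lemma rates_detailed_balance z : w z * lam z = w (z + 1)%Z * mu (z + 1)%Z.
Proof.
  unfold birth, death.
  destruct (Z_nat_or_neg z) as [[n ->]|[n ->]].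
  - replace (Z.of_nat n + 1)%Z with (Z.of_nat (S n)) by lia.
    rewrite !stat_weight_nat, zneg_nat, zpos_nat. cbn [wprod].
    pose proof (pos_INR (S n)). field. nra.
  - replace (- Z.of_nat (S n) + 1)%Z with (- Z.of_nat n)%Z by lia.
    rewrite !stat_weight_neg, zneg_neg, zpos_neg. cbn [wprod].
    pose proof (pos_INR (S n)). field. nra.
Qed.

(* The abandonment rates make the drift uniformly contracting. *)
Lemma rates_curvature z : Rmin th ga <= lam z - lam (z + 1)%Z + mu (z + 1)%Z - mu z.
Proof.
  pose proof (Rmin_l th ga). pose proof (Rmin_r th ga).
  unfold birth, death.
  destruct (Z_nat_or_neg z) as [[n ->]|[n ->]].
  - replace (Z.of_nat n + 1)%Z with (Z.of_nat (S n)) by lia.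
    rewrite !zneg_nat, !zpos_nat, S_INR. lra.
  - replace (- Z.of_nat (S n) + 1)%Z with (- Z.of_nat n)%Z by lia.
    rewrite !zneg_neg, !zpos_neg, S_INR. lra.
Qed.

Definition exp_weight (s : R) (z : Z) : R := w z * exp (s * Rabs (IZR z)).

Lemma exp_weight_nonneg s z : 0 <= exp_weight s z.
Proof.
  unfold exp_weight. pose proof (stat_weight_pos z). pose proof (exp_pos (s * Rabs (IZR z))). nra.
Qed.

Lemma exp_weight_bounded s : exists M, forall N, symsum (exp_weight s) N <= M.
Proof.
  set (p := fun n => wprod al be th n * exp (s * INR n)).
  set (q := fun n => wprod be al ga n * exp (s * INR n)).
  assert (Hp : forall n, 0 <= p n).
  { intros n. unfold p. pose proof (wprod_pos al be th n al_pos be_pos th_pos).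
    pose proof (exp_pos (s * INR n)). nra. }
  assert (Hq : forall n, 0 <= q n).
  { intros n. unfold q. pose proof (wprod_pos be al ga n be_pos al_pos ga_pos).
    pose proof (exp_pos (s * INR n)). nra. }
  destruct (wprod_exp_halving al be th s al_pos be_pos th_pos) as [K1 HK1].
  destruct (wprod_exp_halving be al ga s be_pos al_pos ga_pos) as [K2 HK2].
  exists ((sum_f_R0 p K1 + p K1) + (sum_f_R0 q K2 + q K2)). intros N.
  eapply Rle_trans; [apply symsum_le_halves, exp_weight_nonneg|].
  rewrite (sum_eq (fun n => exp_weight s (Z.of_nat n)) p),
    (sum_eq (fun n => exp_weight s (- Z.of_nat n)%Z) q).
  - pose proof (halving_sum_bounded p K1 Hp HK1 N).
    pose proof (halving_sum_bounded q K2 Hq HK2 N). lra.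
  - intros n _. unfold exp_weight, q. rewrite stat_weight_neg, Rabs_IZR_neg. reflexivity.
  - intros n _. unfold exp_weight, p. rewrite stat_weight_nat, Rabs_IZR_nat. reflexivity.
Qed.

(* Birth rates grow at most linearly, hence are dominated by [exp |z|]. *)
Lemma birth_le_exp z : lam z <= (al + ga) * exp (Rabs (IZR z)).
Proof.
  assert (Hz : zneg z <= Rabs (IZR z)).
  { destruct (Z_nat_or_neg z) as [[n ->]|[n ->]].
    - rewrite zneg_nat, Rabs_IZR_nat. apply pos_INR.
    - rewrite zneg_neg, Rabs_IZR_neg. lra. }
  assert (0 <= zneg z) by (unfold zneg; apply IZR_le; lia).
  pose proof (exp_ineq1_le (Rabs (IZR z))). pose proof (Rabs_pos (IZR z)).
  unfold birth. nra.
Qed.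

Lemma flux_le_exp_weight z : flux lam w z <= (al + ga) * exp_weight 1 z.
Proof.
  unfold flux, exp_weight. rewrite Rmult_1_l.
  pose proof (stat_weight_pos z). pose proof (birth_le_exp z).
  replace ((al + ga) * (w z * exp (Rabs (IZR z)))) with (w z * ((al + ga) * exp (Rabs (IZR z))))
    by ring.
  apply Rmult_le_compat_l; lra.
Qed.

Lemma rates_flux_bounded : exists Ma, forall N, symsum (flux lam w) N <= Ma.
Proof.
  destruct (exp_weight_bounded 1) as [M HM]. exists ((al + ga) * M). intros N.
  eapply Rle_trans; [apply symsum_le; intros z; apply flux_le_exp_weight|].
  rewrite symsum_scal. apply Rmult_le_compat_l; [lra | apply HM].
Qed.

Lemma exp_weight_boundary_cv0 :
  Un_cv (fun N => exp_weight 1 (Z.of_nat N) + exp_weight 1 (- Z.of_nat N)%Z) 0.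
Proof.
  destruct (exp_weight_bounded 1) as [M HM].
  apply (symsum_boundary_cv0 _ M); [apply exp_weight_nonneg | exact HM].
Qed.

Lemma death_nonpos_index n : mu (- Z.of_nat n)%Z = be.
Proof. unfold death. rewrite zpos_neg. ring. Qed.

Lemma birth_nonneg_index n : lam (Z.of_nat n) = al.
Proof. unfold birth. rewrite zneg_nat. ring. Qed.

Lemma rates_boundary_mass_cv0 :
  Un_cv (fun N => flux lam w (Z.of_nat N) + flux lam w (- Z.of_nat N - 1)%Z) 0.
Proof.
  apply (Un_cv_squeeze0 _ (fun N => exp_weight 1 (Z.of_nat N) + exp_weight 1 (- Z.of_nat N)%Z)
           (al + ga + be)); [lra| |exact exp_weight_boundary_cv0].
  intros n.
  rewrite (flux_pred lam mu w rates_detailed_balance (- Z.of_nat n)%Z), death_nonpos_index.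
  pose proof (flux_le_exp_weight (Z.of_nat n)).
  pose proof (flux_pos lam w stat_weight_pos birth_pos (Z.of_nat n)).
  pose proof (exp_weight_nonneg 1 (Z.of_nat n)). pose proof (exp_weight_nonneg 1 (- Z.of_nat n)%Z).
  pose proof (stat_weight_pos (- Z.of_nat n)%Z).
  assert (w (- Z.of_nat n)%Z * be <= be * exp_weight 1 (- Z.of_nat n)%Z).
  { unfold exp_weight. rewrite Rmult_1_l.
    pose proof (exp_ge_1 (Rabs (IZR (- Z.of_nat n))) (Rabs_pos _)).
    rewrite <- (Rmult_1_r (w (- Z.of_nat n)%Z * be)).
    replace (be * (w (- Z.of_nat n)%Z * exp (Rabs (IZR (- Z.of_nat n)))))
      with (w (- Z.of_nat n)%Z * be * exp (Rabs (IZR (- Z.of_nat n)))) by ring.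
    apply Rmult_le_compat_l; nra. }
  split; nra.
Qed.

Lemma rates_boundary_flux_cv0 : Un_cv (boundary_flux lam mu w) 0.
Proof.
  apply (Un_cv_squeeze0 _ (fun N => exp_weight 1 (Z.of_nat N) + exp_weight 1 (- Z.of_nat N)%Z)
           ((al + be) * (al + ga))); [nra| |exact exp_weight_boundary_cv0].
  intros n. unfold boundary_flux.
  replace (Z.of_nat n + 1)%Z with (Z.of_nat (S n)) by lia.
  rewrite birth_nonneg_index, death_nonpos_index.
  pose proof (flux_le_exp_weight (Z.of_nat n)). pose proof (flux_le_exp_weight (- Z.of_nat n)%Z).
  pose proof (flux_pos lam w stat_weight_pos birth_pos (Z.of_nat n)).
  pose proof (flux_pos lam w stat_weight_pos birth_pos (- Z.of_nat n)%Z).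
  pose proof (exp_weight_nonneg 1 (Z.of_nat n)). pose proof (exp_weight_nonneg 1 (- Z.of_nat n)%Z).
  split; nra.
Qed.

End Rates.

(** The transition function of the queue. *)

Section Transition.
Variables (al be th ga : R) (P : R -> Z -> Z -> R) (S : R).
Hypotheses (al_pos : 0 < al) (be_pos : 0 < be) (th_pos : 0 < th) (ga_pos : 0 < ga).
Hypothesis P_transition : bd_transition al be th ga P.
Hypothesis weights_sum : Zhas_sum (stat_weight al be th ga) S.

Local Notation w := (stat_weight al be th ga).
Local Notation lam := (birth al ga).
Local Notation mu := (death be th).

Let w_pos := stat_weight_pos al be th ga al_pos be_pos th_pos ga_pos.
Let lam_pos := birth_pos al ga al_pos ga_pos.
Let balance := rates_detailed_balance al be th ga al_pos be_pos th_pos ga_pos.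

(* For a fixed target [y], [(t, z) |-> P t z y] is a solution of the backward
   equation started from the indicator of [y]. *)
Lemma transition_range t x y : 0 <= t -> 0 <= P t x y <= 1.
Proof.
  intros Ht. destruct P_transition as [Hnonneg [Hmass _]]. split; [apply Hnonneg, Ht|].
  eapply Rle_trans; [|apply (Hmass t x (Z.abs_nat y) Ht)].
  apply (symsum_term (P t x)); [intros; apply Hnonneg, Ht | unfold in_window; lia].
Qed.

Lemma transition_init y z : P 0 z y = if Z.eq_dec z y then 1 else 0.
Proof. apply P_transition. Qed.

Lemma transition_cont y z : right_cont0 (fun t => P t z y).
Proof. apply right_cont0_intro. intros eps He. apply P_transition, He. Qed.

Lemma transition_deriv y t z :
  0 < t -> derivable_pt_lim (fun u => P u z y) t (generator lam mu (fun z => P t z y) z).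
Proof. apply P_transition. Qed.

Lemma transition_dominated x y t : 0 <= t -> w x * P t x y <= w y.
Proof.
  apply (solution_dominated lam mu w w_pos lam_pos balance (fun t z => P t z y)
           (fun t z => transition_range t z y) (transition_cont y) (transition_deriv y) y
           (transition_init y) (rates_boundary_mass_cv0 al be th ga al_pos be_pos th_pos ga_pos)).
Qed.

Lemma transition_limit x y : lim_infty (fun t => P t x y) (w y / S).
Proof.
  destruct (rates_flux_bounded al be th ga al_pos be_pos th_pos ga_pos) as [Ma HMa].
  apply (solution_limit lam mu w w_pos lam_pos balance (fun t z => P t z y)
           (fun t z => transition_range t z y) (transition_cont y) (transition_deriv y) y
           (transition_init y) (rates_boundary_mass_cv0 al be th ga al_pos be_pos th_pos ga_pos)
           S x (proj2 weights_sum)).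
  intros z.
  apply (increment_tends_0 lam mu w w_pos lam_pos (death_nonneg be th be_pos th_pos) balance
           (fun t z => P t z y) (fun t z => transition_range t z y) (transition_cont y)
           (transition_deriv y) (Rmin th ga) Ma (Rmin_pos _ _ th_pos ga_pos)
           (rates_curvature al be th ga) HMa
           (rates_boundary_flux_cv0 al be th ga al_pos be_pos th_pos ga_pos)).
Qed.

Lemma stationary_bound f s y :
  Rabs (f y) <= exp (s * Rabs (IZR y)) ->
  Rabs (f y * (w y / S)) <= / S * exp_weight al be th ga s y.
Proof.
  intros Hf.
  assert (HS : 0 < S).
  { pose proof (symsum_term_le_lim w S 0%Z (fun z => Rlt_le _ _ (w_pos z)) (proj2 weights_sum)).
    pose proof (w_pos 0%Z). lra. }
  unfold exp_weight. rewrite Rabs_mult, (Rabs_right (w y / S))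
    by (apply Rle_ge, Rlt_le, Rdiv_lt_0_compat; [apply w_pos | exact HS]).
  replace (/ S * (w y * exp (s * Rabs (IZR y)))) with (exp (s * Rabs (IZR y)) * (w y / S))
    by (unfold Rdiv; ring).
  apply Rmult_le_compat_r; [apply Rlt_le, Rdiv_lt_0_compat; [apply w_pos | exact HS] | exact Hf].
Qed.

(* By stationary domination, [|P t x y f y| <= exp_weight s y / w x]. *)
Lemma transition_bound x f s t y :
  0 <= t -> Rabs (f y) <= exp (s * Rabs (IZR y)) ->
  Rabs (P t x y * f y) <= / w x * exp_weight al be th ga s y.
Proof.
  intros Ht Hf. pose proof (w_pos x). pose proof (w_pos y).
  pose proof (transition_dominated x y t Ht). pose proof (transition_range t x y Ht).
  assert (HP : P t x y <= / w x * w y).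
  { apply Rmult_le_reg_l with (w x); [lra|]. rewrite <- Rmult_assoc, Rinv_r; lra. }
  unfold exp_weight. rewrite Rabs_mult, (Rabs_right (P t x y)) by lra.
  rewrite <- Rmult_assoc.
  apply Rmult_le_compat; try lra; apply Rabs_pos.
Qed.

Lemma expectation_limit x f s :
  0 <= s -> (forall y, Rabs (f y) <= exp (s * Rabs (IZR y))) ->
  exists L, Zhas_sum (fun i => f i * (w i / S)) L /\ Zsum_tends (fun t y => P t x y * f y) L.
Proof.
  intros Hs Hf.
  destruct (exp_weight_bounded al be th ga al_pos be_pos th_pos ga_pos s) as [M HM].
  assert (Hscaled : forall c, exists M',
             forall N, symsum (fun y => c * exp_weight al be th ga s y) N <= M').
  { intros c. exists (Rabs c * M). intros N. rewrite symsum_scal.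
    pose proof (symsum_nonneg (exp_weight al be th ga s) N
                  (exp_weight_nonneg al be th ga al_pos be_pos th_pos ga_pos s)).
    pose proof (Rle_abs c). pose proof (Rabs_pos c). pose proof (HM N). nra. }
  destruct (Hscaled (/ S)) as [MS HMS]. destruct (Hscaled (/ w x)) as [Mx HMx].
  destruct (Zhas_sum_dominated _ _ MS (fun y => stationary_bound f s y (Hf y)) HMS) as [L HL].
  exists L. split; [exact HL|]. split.
  - exists 0. intros t Ht.
    exact (Zhas_sum_dominated _ _ Mx (fun y => transition_bound x f s t y Ht (Hf y)) HMx).
  - intros eps He.
    destruct (dominated_convergence (fun t y => P t x y * f y) (fun y => f y * (w y / S))
                (fun y => / w x * exp_weight al be th ga s y) Mx 0 L HMx
                (fun t y Ht => transition_bound x f s t y Ht (Hf y))) with (eps := eps)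
      as [T HT]; [| exact (proj2 HL) | exact He |].
    + intros y. apply lim_infty_ext with (f := fun t => f y * P t x y); [intros; ring|].
      apply lim_infty_scal, transition_limit.
    + exists T. intros t e Ht He'. exact (HT t e Ht (proj2 He')).
Qed.

End Transition.

Theorem lemma1 (al be th ga : R) (P : R -> Z -> Z -> R) (S : R) :
  0 < al -> 0 < be -> 0 < th -> 0 < ga ->
  bd_transition al be th ga P ->
  Zhas_sum (stat_weight al be th ga) S ->
  (forall (x : Z) (s : R), 0 <= s ->
     exists L,
       Zhas_sum (fun i => exp (s * Rabs (IZR i)) * (stat_weight al be th ga i / S)) L /\
       Zsum_tends (fun t y => P t x y * exp (s * Rabs (IZR y))) L) /\
  (forall (x : Z) (f : Z -> R),
     (exists s, 0 <= s /\ forall y, Rabs (f y) <= exp (s * Rabs (IZR y))) ->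
     exists L,
       Zhas_sum (fun i => f i * (stat_weight al be th ga i / S)) L /\
       Zsum_tends (fun t y => P t x y * f y) L).
Proof.
  intros Hal Hbe Hth Hga HP HS. split.
  - intros x s Hs. apply (expectation_limit al be th ga P S Hal Hbe Hth Hga HP HS x _ s Hs).
    intros y. rewrite Rabs_right; [lra | apply Rle_ge, Rlt_le, exp_pos].
  - intros x f [s [Hs Hf]].
    exact (expectation_limit al be th ga P S Hal Hbe Hth Hga HP HS x f s Hs Hf).
Qed.
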